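(* Let $G=(V,E)$ be a finite undirected graph with $V=\{1,\dots,p\}$. Then the following are equivalent: (i) for every symmetric positive semidefinite $p\times p$ real matrix $A$ with $\det A=0$, the thresholded matrix $A_G$ is positive semidefinite; (ii) $G=\bigcup_{i=1}^{\tau} G_i$ for some $\tau\in\mathbb{N}$, where $G_1,\dots,G_\tau$ are pairwise disconnected complete graphs (equivalently, every connected component of $G$ is a complete graph).
   Context: For a symmetric $p\times p$ real matrix $A=(a_{ij})$ and an undirected graph $G=(V,E)$ on $V=\{1,\dots,p\}$, the matrix $A_G$ is defined by $(A_G)_{ij}=a_{ij}$ if $i=j$ or $(i,j)\in E$, and $(A_G)_{ij}=0$ otherwise. *)

From mathcomp Require Import all_boot all_order all_algebra.
From mathcomp Require Import reals.
Set Implicit Arguments. Unset Strict Implicit. Unset Printing Implicit Defensive.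
Import Order.TTheory GRing.Theory Num.Theory.
Local Open Scope ring_scope.

Definition simple_graph (p : nat) (e : rel 'I_p) : Prop :=
  symmetric e /\ irreflexive e.

Definition psd {R : realType} {p : nat} (A : 'M[R]_p) : Prop :=
  A^T = A /\ forall v : 'cV[R]_p, 0 <= (v^T *m A *m v) 0 0.

Definition threshold {R : realType} {p : nat} (e : rel 'I_p) (A : 'M[R]_p)
  : 'M[R]_p :=
  \matrix_(i, j) (if (i == j) || e i j then A i j else 0).

Definition components_complete (p : nat) (e : rel 'I_p) : Prop :=
  forall i j : 'I_p, connect e i j -> i != j -> e i j.

(* (ii) -> (i): when every component is a clique, A_G keeps exactly the
   diagonal blocks of A indexed by the components, so v' A_G v is the sum of
   the quadratic forms of A at the restrictions of v to the components.
   (i) -> (ii): a component that is not a clique contains an induced path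
   a - b - c; for the indicator u of {a, b, c}, the singular PSD matrix u u'
   thresholds to a matrix that is not PSD. *)
From mathcomp Require Import all_boot all_order all_algebra.
From mathcomp Require Import reals.
From mathcomp Require Import zify lra.
Set Implicit Arguments.
Unset Strict Implicit.
Unset Printing Implicit Defensive.

Import Order.TTheory GRing.Theory Num.Theory.
Local Open Scope ring_scope.

Lemma qformE (R : realType) (p : nat) (A : 'M[R]_p) (v : 'cV[R]_p) :
  (v^T *m A *m v) 0 0 = \sum_i \sum_j v i 0 * A i j * v j 0.
Proof.
rewrite mxE exchange_big; apply: eq_bigr => j _; rewrite mxE big_distrl /=.
by apply: eq_bigr => i _; rewrite !mxE.
Qed.

Lemma sum_supported (V : nmodType) (I : finType) (s : seq I) (g : I -> V) :
  uniq s -> (forall i, i \notin s -> g i = 0) -> \sum_i g i = \sum_(i <- s) g i.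
Proof.
move=> s_uniq g0; rewrite (big_uniq _ s_uniq) [RHS]big_mkcond /=.
by apply: eq_bigr => i _; case: ifPn => // /g0.
Qed.

Lemma qform_supported (R : realType) (p : nat) (s : seq 'I_p) (M : 'M[R]_p)
    (v : 'cV[R]_p) :
  uniq s -> (forall i, i \notin s -> v i 0 = 0) ->
  (v^T *m M *m v) 0 0 = \sum_(i <- s) \sum_(j <- s) v i 0 * M i j * v j 0.
Proof.
move=> s_uniq v0; rewrite qformE (sum_supported s_uniq) => [|i /v0->]; last first.
  by rewrite big1 // => j _; rewrite !mul0r.
apply: eq_bigr => i _; apply: sum_supported => // j /v0->; exact: mulr0.
Qed.

Lemma psd_outer (R : realType) (n : nat) (u : 'cV[R]_n) : psd (u *m u^T).
Proof.
split=> [|v]; first by rewrite trmx_mul trmxK.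
have -> : v^T *m (u *m u^T) *m v = (v^T *m u) *m (v^T *m u)^T.
  by rewrite trmx_mul trmxK !mulmxA.
by rewrite mxE big_ord1 !mxE -expr2 sqr_ge0.
Qed.

Lemma det_outer_eq0 (F : fieldType) (n : nat) (u : 'cV[F]_n) :
  (1 < n)%N -> \det (u *m u^T) = 0.
Proof.
move=> n_gt1; apply/eqP; apply: contraTT n_gt1 => det_neq0.
have uuT_unit : u *m u^T \in unitmx by rewrite unitmxE unitfE.
rewrite -leqNgt -(mxrank_unit uuT_unit).
exact: leq_trans (mxrankM_maxl _ _) (rank_leq_col u).
Qed.

Lemma psd_fiber_mask (R : realType) (p : nat) (T : finType) (f : 'I_p -> T)
    (A : 'M[R]_p) :
  psd A -> psd (\matrix_(i, j) (if f i == f j then A i j else 0)).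
Proof.
move=> [AT A_ge0]; split=> [|v].
  by apply/matrixP => i j; rewrite !mxE eq_sym -{1}AT mxE.
pose w k := \col_i (if f i == k then v i 0 else 0).
have -> : (v^T *m \matrix_(i, j) (if f i == f j then A i j else 0) *m v) 0 0
          = \sum_k ((w k)^T *m A *m w k) 0 0.
  rewrite qformE; under [RHS]eq_bigr do rewrite qformE.
  rewrite [RHS]exchange_big; apply: eq_bigr => i _.
  rewrite [RHS]exchange_big; apply: eq_bigr => j _.
  rewrite (bigD1 (f i)) //= big1 => [|k /negPf ik]; last first.
    by rewrite mxE eq_sym ik !mul0r.
  by rewrite !mxE eqxx addr0 eq_sym; case: ifP; rewrite ?mulr0 ?mul0r.
by apply: sumr_ge0 => k _; apply: A_ge0.
Qed.

Lemma threshold_complete_components (R : realType) (p : nat) (e : rel 'I_p)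
    (A : 'M[R]_p) :
  symmetric e -> components_complete e ->
  threshold e A =
    \matrix_(i, j) (if fingraph.root e i == fingraph.root e j then A i j else 0).
Proof.
move=> e_sym e_cc; apply/matrixP => i j.
rewrite !mxE root_connect; last exact: sym_connect_sym.
suff -> : (i == j) || e i j = connect e i j by [].
case: (eqVneq i j) => [->|ij] /=; first by rewrite connect0.
by apply/idP/idP => [/connect1|/e_cc]; apply.
Qed.

Lemma connect_induced_P3 (T : finType) (e : rel T) (x y : T) :
  connect e x y -> x != y -> ~~ e x y ->
  exists a b c, [/\ e a b, e b c, a != c & ~~ e a c].
Proof.
case/connectP => s + ->; elim: s x => [|z s IH] x /=; first by rewrite eqxx.
case/andP => exz zs xl nexl.
have [ezl|nezl] := boolP (e z (last z s)); first by exists x, z, (last z s).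
have [zl|nzl] := eqVneq z (last z s); first by rewrite -zl exz in nexl.
exact: IH zs nzl nezl.
Qed.

Lemma P3_threshold_counterexample (R : realType) (p : nat) (e : rel 'I_p)
    (a b c : 'I_p) :
  simple_graph e -> e a b -> e b c -> a != c -> ~~ e a c ->
  exists A : 'M[R]_p, [/\ psd A, \det A = 0 & ~ psd (threshold e A)].
Proof.
move=> [e_sym e_irr] eab ebc ac neac.
have ab : a != b by apply: contraTneq eab => ->; rewrite e_irr.
have bc : b != c by apply: contraTneq ebc => ->; rewrite e_irr.
have abc_uniq : uniq [:: a; b; c] by rewrite /= !inE negb_or ab ac bc.
pose u : 'cV[R]_p := \col_i (i \in [:: a; b; c])%:R.
exists (u *m u^T); split; first exact: psd_outer.
  apply: det_outer_eq0; rewrite ltnNge; apply: contra ab => p_le1.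
  by apply/eqP/val_inj => /=; have := ltn_ord a; have := ltn_ord b; lia.
(* On [a; b; c] the thresholded matrix is [[1,1,0],[1,1,1],[0,1,1]], whose
   quadratic form is -1 at (1,-1,1). *)
pose v : 'cV[R]_p :=
  \col_i (if i == a then 1 else if i == b then -1 else if i == c then 1 else 0).
have v0 i : i \notin [:: a; b; c] -> v i 0 = 0.
  rewrite !inE !negb_or => /and3P[/negPf ia /negPf ib /negPf ic].
  by rewrite mxE ia ib ic.
case=> _ /(_ v); rewrite (qform_supported _ abc_uniq v0) !big_cons !big_nil.
rewrite !mxE !big_ord1 !mxE !inE !eqxx !orbT /=.
rewrite (negPf ab) (negPf ac) (negPf bc) ![_ == a]eq_sym ![c == b]eq_sym.
rewrite (negPf ab) (negPf ac) (negPf bc) (e_sym b a) (e_sym c a) (e_sym c b).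
rewrite eab ebc (negPf neac) /=; lra.
Qed.

Theorem corollary3 (R : realType) (p : nat) (e : rel 'I_p) :
  simple_graph e ->
  ((forall A : 'M[R]_p, psd A -> \det A = 0 -> psd (threshold e A))
   <-> components_complete e).
Proof.
move=> e_simple; have [e_sym _] := e_simple; split.
- move=> threshold_psd i j cij ij; apply/negPn/negP => neij.
  have [a [b [c [eab ebc ac neac]]]] := connect_induced_P3 cij ij neij.
  have [A [A_psd A_det0 thrA_not_psd]] :=
    P3_threshold_counterexample R e_simple eab ebc ac neac.
  exact: thrA_not_psd (threshold_psd A A_psd A_det0).
- move=> e_cc A A_psd _; rewrite threshold_complete_components //.
  exact: psd_fiber_mask.
Qed.
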